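(* If $K$ is a simply connected (pathwise connected) poset, then every $\mathrm{C}^*$-net bundle $(\mathcal A,\jmath)_K$ over $K$ is trivial.
   Context: Poset homotopy: $0$-simplices are elements of $K$; an $n$-simplex $x$ ($n\ge1$) consists of $(n-1)$-simplices $\partial_0x,\dots,\partial_nx$ and a support $|x|\in K$ with $|\partial_ix|\le|x|$. Paths are concatenations $b_n*\cdots*b_1$ of $1$-simplices with $\partial_0b_i=\partial_1b_{i+1}$; $K$ is pathwise connected if any two elements are joined by a path; homotopy is generated by replacing consecutive $\partial_0c*\partial_2c$ by $\partial_1c$ or conversely ($c$ a $2$-simplex); $K$ is simply connected if the group $\pi_1^o(K)$ of homotopy classes of loops at $o$ is trivial. A $\mathrm{C}^*$-net bundle $(\mathcal A,\jmath)_K$ assigns unital $\mathrm{C}^*$-algebras $\mathcal A_o$ and ${}^*$-isomorphisms $\jmath_{oa}:\mathcal A_a\to\mathcal A_o$ for $a\le o$ with $\jmath_{oa}\circ\jmath_{ae}=\jmath_{oe}$. It is trivial if there are ${}^*$-isomorphisms $\phi_o:\mathcal A_o\to\mathrm A$ onto a fixed $\mathrm{C}^*$-algebra with $\phi_o\circ\jmath_{oa}=\phi_a$ for all $a\le o$ (i.e. it is isomorphic to the constant net bundle with fibre $\mathrm A$). *)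

From HB Require Import structures.
From mathcomp Require Import all_boot all_order all_algebra.
From mathcomp Require Import complex.
From mathcomp Require Import reals.
From Stdlib Require Import Relation_Operators.
Set Implicit Arguments. Unset Strict Implicit. Unset Printing Implicit Defensive.
Import Order.TTheory GRing.Theory Num.Theory.
Local Open Scope ring_scope.

Section PosetHomotopy.
Context {d : Order.disp_t} (K : porderType d).

(* A 1-simplex: boundaries d0 (end), d1 (start) and support. *)
Record simplex1 := Simplex1 {
  s1_d0 : K; s1_d1 : K; s1_supp : K;
  s1_le0 : (s1_d0 <= s1_supp)%O;
  s1_le1 : (s1_d1 <= s1_supp)%O }.

(* A 2-simplex: three 1-simplices and a support, satisfying the
   simplicial identities  d_i d_j = d_{j-1} d_i  (i < j). *)
Record simplex2 := Simplex2 {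
  s2_d0 : simplex1; s2_d1 : simplex1; s2_d2 : simplex1; s2_supp : K;
  s2_le0 : (s1_supp s2_d0 <= s2_supp)%O;
  s2_le1 : (s1_supp s2_d1 <= s2_supp)%O;
  s2_le2 : (s1_supp s2_d2 <= s2_supp)%O;
  s2_id01 : s1_d0 s2_d1 = s1_d0 s2_d0;
  s2_id02 : s1_d0 s2_d2 = s1_d1 s2_d0;
  s2_id12 : s1_d1 s2_d2 = s1_d1 s2_d1 }.

Definition deg1 (o : K) : simplex1 := @Simplex1 o o o (lexx o) (lexx o).

(* A path  b_n * ... * b_1  is represented by the list [:: b_n; ...; b_1];
   consecutive condition  d0 b_i = d1 b_{i+1}. *)
Fixpoint chain (l : seq simplex1) : Prop :=
  match l with
  | x :: ((y :: _) as t) => s1_d1 x = s1_d0 y /\ chain t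
  | _ => True
  end.

Definition is_path_from_to (a o : K) (l : seq simplex1) : Prop :=
  chain l /\ exists b l', l = b :: l' /\ s1_d0 b = o /\ s1_d1 (last b l') = a.

Definition is_loop (o : K) (l : seq simplex1) : Prop := is_path_from_to o o l.

Definition pathwise_connected : Prop :=
  forall a o : K, exists l, is_path_from_to a o l.

Definition htp_step (p q : seq simplex1) : Prop :=
  exists (l r : seq simplex1) (c : simplex2),
    p = l ++ [:: s2_d0 c; s2_d2 c] ++ r /\ q = l ++ [:: s2_d1 c] ++ r.

Definition homotopic : seq simplex1 -> seq simplex1 -> Prop :=
  clos_refl_sym_trans (seq simplex1) htp_step.

Definition pi1_trivial (o : K) : Prop :=
  forall l, is_loop o l -> homotopic l [:: deg1 o].

Definition simply_connected : Prop :=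
  pathwise_connected /\ forall o : K, pi1_trivial o.

End PosetHomotopy.

Definition normc {R : realType} (z : R[i]) : R := ComplexField.Normc.normc z.

Record CStarAlg (R : realType) := CStarAlgMk {
  cs_car :> lmodType R[i];
  cs_mul : cs_car -> cs_car -> cs_car;
  cs_one : cs_car;
  cs_star : cs_car -> cs_car;
  cs_norm : cs_car -> R;
  cs_mulA : forall x y z, cs_mul x (cs_mul y z) = cs_mul (cs_mul x y) z;
  cs_mul1l : forall x, cs_mul cs_one x = x;
  cs_mul1r : forall x, cs_mul x cs_one = x;
  cs_mulDl : forall x y z, cs_mul (x + y) z = cs_mul x z + cs_mul y z;
  cs_mulDr : forall x y z, cs_mul x (y + z) = cs_mul x y + cs_mul x z;
  cs_scaleAl : forall (a : R[i]) x y, a *: cs_mul x y = cs_mul (a *: x) y;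
  cs_scaleAr : forall (a : R[i]) x y, a *: cs_mul x y = cs_mul x (a *: y);
  cs_starK : forall x, cs_star (cs_star x) = x;
  cs_starD : forall x y, cs_star (x + y) = cs_star x + cs_star y;
  cs_starZ : forall (a : R[i]) x, cs_star (a *: x) = conjc a *: cs_star x;
  cs_starM : forall x y, cs_star (cs_mul x y) = cs_mul (cs_star y) (cs_star x);
  cs_norm_eq0 : forall x, cs_norm x = 0 -> x = 0;
  cs_normD : forall x y, cs_norm (x + y) <= cs_norm x + cs_norm y;
  cs_normZ : forall (a : R[i]) x, cs_norm (a *: x) = normc a * cs_norm x;
  cs_normM : forall x y, cs_norm (cs_mul x y) <= cs_norm x * cs_norm y;
  cs_normC : forall x, cs_norm (cs_mul (cs_star x) x) = cs_norm x ^+ 2;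
  cs_complete : forall u : nat -> cs_car,
    (forall e : R, 0 < e -> exists N, forall m n, (N <= m)%N -> (N <= n)%N ->
        cs_norm (u m - u n) < e) ->
    exists l, forall e : R, 0 < e -> exists N, forall n, (N <= n)%N ->
        cs_norm (u n - l) < e }.

Definition star_hom {R : realType} (A B : CStarAlg R) (f : A -> B) : Prop :=
  [/\ forall x y, f (x + y) = f x + f y,
      forall (a : R[i]) x, f (a *: x) = a *: f x,
      forall x y, f (cs_mul x y) = cs_mul (f x) (f y),
      f (cs_one A) = cs_one B &
      forall x, f (cs_star x) = cs_star (f x)].

Definition star_iso {R : realType} (A B : CStarAlg R) (f : A -> B) : Prop :=
  star_hom f /\ bijective f.

Record net_bundle (R : realType) {d : Order.disp_t} (K : porderType d) :=
  NetBundle {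
  nb_alg : K -> CStarAlg R;
  nb_j : forall a o : K, (a <= o)%O -> nb_alg a -> nb_alg o;
  nb_iso : forall (a o : K) (h : (a <= o)%O), star_iso (nb_j h);
  nb_comp : forall (e a o : K) (hoa : (a <= o)%O) (hae : (e <= a)%O)
      (hoe : (e <= o)%O) (x : nb_alg e),
      nb_j hoa (nb_j hae x) = nb_j hoe x }.

(* Triviality: isomorphic to a constant net bundle. *)
Definition trivial_bundle (R : realType) {d : Order.disp_t} (K : porderType d)
    (N : net_bundle R K) : Prop :=
  exists (B : CStarAlg R) (phi : forall o : K, nb_alg N o -> B),
    (forall o, star_iso (phi o)) /\
    (forall (a o : K) (h : (a <= o)%O) (x : nb_alg N a),
        phi o (nb_j h x) = phi a x).

From mathcomp Require Import all_boot all_order all_algebra.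
From mathcomp Require Import complex reals.
From Stdlib Require Import Eqdep_dec ClassicalEpsilon Classical.
Set Implicit Arguments. Unset Strict Implicit. Unset Printing Implicit Defensive.
Import Order.TTheory GRing.Theory.
Local Open Scope ring_scope.

(* The transition maps let one transport an element of a fibre along a path:
   a 1-simplex b carries x in A_{d1 b} to the unique y in A_{d0 b} having the
   same image as x in A_{|b|}.  Across a 2-simplex c all the images meet in
   A_{|c|}, so transport along d0 c * d2 c equals transport along d1 c, and
   transport is homotopy invariant.  In a simply connected poset, transport
   from o to o' is therefore independent of the path; it commutes with every
   operation preserved by the j's, so it is a *-isomorphism A_o -> A_o', and
   it is compatible with j because j_{oa} is itself transport along the
   1-simplex (o, a; o).  Transporting everything to a base point trivializes
   the bundle. *)

Section Transport.

Context {disp : Order.disp_t} {K : porderType disp} (A : K -> Type).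
Context (j : forall {a o : K}, (a <= o)%O -> A a -> A o).
Hypothesis j_comp : forall (e a o : K) (hoa : (a <= o)%O) (hae : (e <= a)%O)
  (hoe : (e <= o)%O) (x : A e), j hoa (j hae x) = j hoe x.
Hypothesis j_bij : forall (a o : K) (h : (a <= o)%O), bijective (j h).

Local Notation point := {a : K & A a}.

Lemma existT_inj (a : K) (x y : A a) : existT A a x = existT A a y -> x = y.
Proof. exact: (inj_pair2_eq_dec _ (@eq_comparable K)). Qed.

Lemma j_inj (a o : K) (h : (a <= o)%O) : injective (j h).
Proof. exact/bij_inj/j_bij. Qed.
Arguments j_inj {a o} h [x1 x2].

Lemma j_id (o : K) (h : (o <= o)%O) (x : A o) : j h x = x.
Proof. by apply: (j_inj h); rewrite (j_comp h h h). Qed.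

Definition agree (s : K) (P Q : point) :=
  exists (hP : (tag P <= s)%O) (hQ : (tag Q <= s)%O),
    j hP (tagged P) = j hQ (tagged Q).

Lemma agree_sym s P Q : agree s P Q -> agree s Q P.
Proof. by move=> [hP [hQ e]]; exists hQ, hP. Qed.

Lemma agree_trans s P M Q : agree s P M -> agree s M Q -> agree s P Q.
Proof.
move=> [hP [hM e1]] [hM' [hQ e2]]; exists hP, hQ.
by rewrite e1 -e2 (bool_irrelevance hM hM').
Qed.

Lemma agree_up s t P Q : (s <= t)%O -> agree s P Q -> agree t P Q.
Proof.
move=> hst [hP [hQ e]]; exists (le_trans hP hst), (le_trans hQ hst).
by rewrite -(j_comp hst hP) -(j_comp hst hQ) e.
Qed.

Lemma agree_down s t P Q : (s <= t)%O -> (tag P <= s)%O -> (tag Q <= s)%O ->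
  agree t P Q -> agree s P Q.
Proof.
move=> hst hP hQ [hP' [hQ' e]]; exists hP, hQ; apply: (j_inj hst).
by rewrite (j_comp hst hP hP') (j_comp hst hQ hQ').
Qed.

Lemma agree_ex s P a : (tag P <= s)%O -> (a <= s)%O ->
  exists2 Q : point, tag Q = a & agree s P Q.
Proof.
move=> hP ha; have [ja jaK jaV] := j_bij ha.
exists (existT A a (ja (j hP (tagged P)))) => //.
by exists hP, ha; rewrite /= jaV.
Qed.

Lemma agree_eq s P Q : tag P = s -> tag Q = s -> agree s P Q -> P = Q.
Proof.
case: P Q => [a x] [b y] /= <- eb; subst b => -[ha [hb]] /=.
by rewrite (bool_irrelevance hb ha) => /(j_inj ha) ->.
Qed.

Lemma agree_op (F : forall a, A a -> A a -> A a) s a b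
    (x x' : A a) (y y' : A b) :
  (forall a o (h : (a <= o)%O) u v, j h (F a u v) = F o (j h u) (j h v)) ->
  agree s (existT A a x) (existT A b y) ->
  agree s (existT A a x') (existT A b y') ->
  agree s (existT A a (F a x x')) (existT A b (F b y y')).
Proof.
move=> F_nat [ha [hb e]] [ha' [hb' e']]; exists ha, hb; rewrite /= !F_nat.
by rewrite e -(bool_irrelevance ha' ha) -(bool_irrelevance hb' hb) e'.
Qed.

Definition step (b : simplex1 K) (P Q : point) :=
  [/\ tag P = s1_d1 b, tag Q = s1_d0 b & agree (s1_supp b) P Q].

(* Paths are written right to left: [transport (b :: l)] follows [l] first. *)
Fixpoint transport (l : seq (simplex1 K)) (P Q : point) : Prop :=
  if l is b :: l' then exists M, transport l' P M /\ step b M Q else P = Q.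

Definition flip (b : simplex1 K) : simplex1 K :=
  Simplex1 (s1_le1 b) (s1_le0 b).

Lemma step_flip b P Q : step b P Q -> step (flip b) Q P.
Proof. by case=> eP eQ /agree_sym. Qed.

Lemma step_ex b P : tag P = s1_d1 b -> exists Q, step b P Q.
Proof.
move=> eP; have hP : (tag P <= s1_supp b)%O by rewrite eP s1_le1.
by have [Q eQ aPQ] := agree_ex hP (s1_le0 b); exists Q.
Qed.

Lemma step_2simplex (c : simplex2 K) P Q :
  (exists M, step (s2_d2 c) P M /\ step (s2_d0 c) M Q) <-> step (s2_d1 c) P Q.
Proof.
have hd1 : (s1_d1 (s2_d1 c) <= s1_supp (s2_d1 c))%O := s1_le1 _.
have hd0 : (s1_d0 (s2_d1 c) <= s1_supp (s2_d1 c))%O := s1_le0 _.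
split=> [[M [[eP eM aPM] [eM' eQ aMQ]]] | [eP eQ aPQ]].
  have eP1 : tag P = s1_d1 (s2_d1 c) by rewrite eP s2_id12.
  have eQ1 : tag Q = s1_d0 (s2_d1 c) by rewrite eQ s2_id01.
  split=> //; apply: (agree_down (s2_le1 c)); rewrite ?eP1 ?eQ1 //.
  exact: agree_trans (agree_up (s2_le2 c) aPM) (agree_up (s2_le0 c) aMQ).
have hP : (tag P <= s2_supp c)%O.
  by rewrite eP (le_trans hd1 (s2_le1 c)).
have hM : (s1_d0 (s2_d2 c) <= s2_supp c)%O := le_trans (s1_le0 _) (s2_le2 c).
have [M eM aPM] := agree_ex hP hM.
have aMQ : agree (s2_supp c) M Q.
  exact: agree_trans (agree_sym aPM) (agree_up (s2_le1 c) aPQ).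
exists M; split; split=> //.
- by rewrite eP s2_id12.
- apply: (agree_down (s2_le2 c)) aPM; rewrite ?eM ?s1_le0 //.
  by rewrite eP -s2_id12 s1_le1.
- by rewrite eM s2_id02.
- by rewrite eQ s2_id01.
apply: (agree_down (s2_le0 c)) aMQ; first by rewrite eM s2_id02 s1_le1.
by rewrite eQ s2_id01 s1_le0.
Qed.

Lemma transport1 b P Q : transport [:: b] P Q <-> step b P Q.
Proof. by split=> [[M [-> ?]] | ?] //; exists P. Qed.

Lemma transport2 b1 b2 P Q :
  transport [:: b1; b2] P Q <-> exists M, step b2 P M /\ step b1 M Q.
Proof.
by split=> [[M [/transport1 ? ?]] | [M [? ?]]]; exists M; split=> //; apply/transport1.
Qed.

Lemma transport_cat l m P Q :
  transport (l ++ m) P Q <-> exists M, transport m P M /\ transport l M Q.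
Proof.
elim: l Q => [|b l IH] Q /=; first by split=> [? | [M [? <-]]] //; exists Q.
split=> [[M' [/IH [M [? ?]] ?]] | [M [? [M' [? ?]]]]].
  by exists M; split=> //; exists M'.
by exists M'; split=> //; apply/IH; exists M.
Qed.

Lemma transport_rev l P Q : transport l P Q -> transport (rev (map flip l)) Q P.
Proof.
elim: l Q => [|b l IH] Q /=; first by move->.
move=> [M [hPM /step_flip hQM]]; rewrite rev_cons -cats1.
by apply/transport_cat; exists M; split; [apply/transport1 | apply: IH].
Qed.

Lemma transport_is_path b l P Q : transport (b :: l) P Q ->
  [/\ chain (b :: l), tag Q = s1_d0 b & tag P = s1_d1 (last b l)].
Proof.
elim: l b Q => [|b' l IH] b Q [M [hPM [eM eQ _]]]; first by split=> //; rewrite hPM.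
have [hc eM' eP] := IH b' M hPM.
by split=> //; split=> //; rewrite -eM eM'.
Qed.

Lemma transport_ex b l P : chain (b :: l) -> tag P = s1_d1 (last b l) ->
  exists Q, transport (b :: l) P Q.
Proof.
elim: l b => [|b' l IH] b /= => [_ /step_ex [Q ?] | [e hc] eP].
  by exists Q, P.
have [M hPM] := IH b' hc eP; have [_ eM _] := transport_is_path hPM.
by have [Q hMQ] := step_ex (etrans eM (esym e)); exists Q, M.
Qed.

Lemma transport_along l P Q P' : transport l P Q -> tag P' = tag P ->
  exists2 Q', tag Q' = tag Q & transport l P' Q'.
Proof.
case: l => [<- eP' | b l hPQ eP']; first by exists P'.
have [hc eQ eP] := transport_is_path hPQ.
have [Q' hQ'] := transport_ex hc (etrans eP' eP).
by have [_ eQ' _] := transport_is_path hQ'; exists Q'; rewrite ?eQ ?eQ'.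
Qed.

Lemma transport_op (F : forall a, A a -> A a -> A a) l a b
    (x x' : A a) (y y' : A b) :
  (forall a o (h : (a <= o)%O) u v, j h (F a u v) = F o (j h u) (j h v)) ->
  transport l (existT A a x) (existT A b y) ->
  transport l (existT A a x') (existT A b y') ->
  transport l (existT A a (F a x x')) (existT A b (F b y y')).
Proof.
move=> F_nat; elim: l b y y' => [|b0 l IH] b y y' /=.
  move=> e; have /= eab := f_equal tag e; subst b.
  by rewrite (existT_inj e) => /existT_inj ->.
move=> [[m z] [hz [/= em eb a1]]] [[m' z'] [hz' [/= em' _ a2]]]; subst m m' b.
exists (existT A _ (F _ z z')); split; first exact: IH.
by split=> //; apply: agree_op.
Qed.

Lemma transport_cat_congr l m m' r :
  (forall P Q, transport m P Q <-> transport m' P Q) ->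
  forall P Q, transport (l ++ m ++ r) P Q <-> transport (l ++ m' ++ r) P Q.
Proof.
move=> hm P Q; rewrite !transport_cat.
by split=> -[M [/transport_cat [M' [? /hm ?]] ?]];
  exists M; split=> //; apply/transport_cat; exists M'.
Qed.

Lemma transport_homotopic p q : homotopic p q ->
  forall P Q, transport p P Q <-> transport q P Q.
Proof.
elim=> [{}p {}q [l [r [c [-> ->]]]] | {}p | {}p {}q _ IH | p1 p2 p3 _ IH1 _ IH2].
- by apply: transport_cat_congr => P Q; rewrite transport2 transport1 step_2simplex.
- by [].
- by move=> P Q; rewrite IH.
- by move=> P Q; rewrite IH1 IH2.
Qed.

Lemma transport_loop o l P Q : pi1_trivial o -> transport l P Q ->
  tag P = o -> tag Q = o -> P = Q.
Proof.
case: l => [_ -> // | b l] pi1_o hPQ eP eQ.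
have [hc eQ' eP'] := transport_is_path hPQ.
have loop : is_loop o (b :: l) by split=> //; exists b, l; rewrite -eP' -eQ'.
have /transport1 [_ _] := (transport_homotopic (pi1_o _ loop) P Q).1 hPQ.
exact: agree_eq.
Qed.

Definition related (P Q : point) := exists l, transport l P Q.

Lemma related_sym P Q : related P Q -> related Q P.
Proof. by move=> [l /transport_rev hQP]; exists (rev (map flip l)). Qed.

Lemma related_trans P M Q : related P M -> related M Q -> related P Q.
Proof.
by move=> [l1 h1] [l2 h2]; exists (l2 ++ l1); apply/transport_cat; exists M.
Qed.

Lemma related_j (a o : K) (h : (a <= o)%O) (x : A a) :
  related (existT A a x) (existT A o (j h x)).
Proof.
exists [:: Simplex1 (lexx o) h]; apply/transport1; split=> //.
by exists h, (lexx o); rewrite /= j_id.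
Qed.

Section Trivialization.

Hypotheses (K_connected : pathwise_connected K)
           (K_pi1 : forall o : K, pi1_trivial o).

Lemma related_ex P (o : K) : exists2 Q : point, tag Q = o & related P Q.
Proof.
have [l [hc [b [l' [el [e0 e1]]]]]] := K_connected (tag P) o; subst l.
have [Q hPQ] := transport_ex hc (esym e1).
have [_ eQ _] := transport_is_path hPQ.
by exists Q; [rewrite eQ | exists (b :: l')].
Qed.

Lemma related_fibre_eq P Q : related P Q -> tag P = tag Q -> P = Q.
Proof. by move=> [l hPQ] eP; exact: transport_loop (@K_pi1 (tag Q)) hPQ eP erefl. Qed.

Lemma carry_ex (o o' : K) (x : A o) :
  exists y : A o', related (existT A o x) (existT A o' y).
Proof.
have [[b y] /= eb hy] := related_ex (existT A o x) o'.
by subst b; exists y.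
Qed.

Definition carry (o o' : K) (x : A o) : A o' :=
  proj1_sig (constructive_indefinite_description _ (carry_ex o' x)).

Lemma carry_related (o o' : K) (x : A o) :
  related (existT A o x) (existT A o' (carry o' x)).
Proof. exact: proj2_sig (constructive_indefinite_description _ (carry_ex o' x)). Qed.

Lemma carry_unique (o o' : K) (x : A o) (y : A o') :
  related (existT A o x) (existT A o' y) -> carry o' x = y.
Proof.
move=> hxy; apply/existT_inj/related_fibre_eq => //.
exact: related_trans (related_sym (carry_related o' x)) hxy.
Qed.

Lemma carryK (o o' : K) : cancel (carry (o := o) o') (carry o).
Proof. by move=> x; apply/carry_unique/related_sym/carry_related. Qed.

Lemma carry_j (a o o' : K) (h : (a <= o)%O) (x : A a) :
  carry o' (j h x) = carry o' x.
Proof.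
apply: carry_unique; apply: related_trans (carry_related o' x).
exact/related_sym/related_j.
Qed.

Lemma carry_op2 (F : forall a, A a -> A a -> A a) (o o' : K) (x x' : A o) :
  (forall a o (h : (a <= o)%O) u v, j h (F a u v) = F o (j h u) (j h v)) ->
  carry o' (F o x x') = F o' (carry o' x) (carry o' x').
Proof.
move=> F_nat; have [l hl] := carry_related o' x.
have [[b y] /= eb hy] := transport_along (P' := existT A o x') hl erefl; subst b.
have -> : carry o' x' = y by apply: carry_unique; exists l.
by apply: carry_unique; exists l; apply: transport_op.
Qed.

Lemma carry_op1 (F : forall a, A a -> A a) (o o' : K) (x : A o) :
  (forall a o (h : (a <= o)%O) u, j h (F a u) = F o (j h u)) ->
  carry o' (F o x) = F o' (carry o' x).
Proof.
move=> F_nat.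
exact: (@carry_op2 (fun a u _ => F a u) _ o' x x (fun a o h u _ => F_nat a o h u)).
Qed.

Lemma carry_op0 (c : forall a, A a) (o o' : K) :
  (forall a o (h : (a <= o)%O), j h (c a) = c o) -> carry o' (c o) = c o'.
Proof.
move=> c_nat.
exact: (@carry_op1 (fun a _ => c a) _ o' (c o) (fun a o h _ => c_nat a o h)).
Qed.

End Trivialization.

End Transport.

Definition zero_cstar (R : realType) : CStarAlg R.
Proof.
refine (@CStarAlgMk R 'rV[R[i]]_0 (fun _ _ => 0) 0 (fun _ => 0) (fun _ => 0)
  _ _ _ _ _ _ _ _ _ _ _ _ _ _ _ _ _) => *; rewrite ?thinmx0 ?mulr0 ?addr0 ?expr0n //.
by exists 0 => e e_gt0; exists 0%N.
Defined.

Section NetBundle.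

Context (R : realType) (disp : Order.disp_t) (K : porderType disp).
Context (N : net_bundle R K).
Hypotheses (K_connected : pathwise_connected K)
           (K_pi1 : forall o : K, pi1_trivial o).

Local Notation A := (nb_alg N).
Local Notation j := (@nb_j _ _ _ N _ _).

Lemma nb_j_bij (a o : K) (h : (a <= o)%O) : bijective (j h).
Proof. by case: (nb_iso N h). Qed.

Local Notation carry := (carry nb_j_bij K_connected).

Lemma carry_star_iso (o o' : K) : star_iso (carry o' : A o -> A o').
Proof.
have j_hom a b (h : (a <= b)%O) : star_hom (j h) by case: (nb_iso N h).
have carryK := carryK (@nb_comp _ _ _ N) nb_j_bij K_connected K_pi1.
split; last by exists (carry o); apply: carryK.
have op2 := carry_op2 (@nb_comp _ _ _ N) nb_j_bij K_connected K_pi1.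
have op1 := carry_op1 (@nb_comp _ _ _ N) nb_j_bij K_connected K_pi1.
have op0 := carry_op0 (@nb_comp _ _ _ N) nb_j_bij K_connected K_pi1.
split=> [x y | c x | x y | | x].
- by apply: (op2 (fun a (u v : A a) => u + v)) => a b h u v; case: (j_hom a b h).
- by apply: (op1 (fun a (u : A a) => c *: u)) => a b h u; case: (j_hom a b h).
- by apply: (op2 (fun a (u v : A a) => cs_mul u v)) => a b h u v; case: (j_hom a b h).
- by apply: (op0 (fun a => cs_one (A a))) => a b h; case: (j_hom a b h).
- by apply: (op1 (fun a (u : A a) => cs_star u)) => a b h u; case: (j_hom a b h).
Qed.

End NetBundle.

Theorem corollary3p9 (R : realType) (d : Order.disp_t) (K : porderType d) :
  simply_connected K -> forall N : net_bundle R K, trivial_bundle N.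
Proof.
move=> [K_connected K_pi1] N.
have [[o0] | K_empty] := classic (inhabited K).
  exists (nb_alg N o0), (fun o => carry (nb_j_bij N) K_connected o0 : nb_alg N o -> _).
  split=> [o | a o h x]; first exact: carry_star_iso.
  exact: (carry_j (@nb_comp _ _ _ N) _ _ K_pi1).
exists (zero_cstar R), (fun o => match K_empty (inhabits o) with end).
by split=> [o | a o]; case: (K_empty (inhabits o)).
Qed.
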